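(* Let $\hat{\mathsf A}$ be a $\chi\times\chi$ matrix with entries in $\mathcal A$, and let $A_0=\langle\hat 1,\hat{\mathsf A}\rangle$ be the complex matrix of its identity components. If every eigenvalue of the transfer matrix $T_A$ lies strictly inside the unit disk, then every eigenvalue of $A_0$ lies strictly inside the unit disk.
   Context: $\mathcal A$ is the algebra of operators on $\mathbb C^q$ with inner product $\langle\hat A,\hat B\rangle=\mathrm{Tr}[\hat A^\dagger\hat B]/\mathrm{Tr}[\hat 1]$ and an orthonormal basis $\{\hat O_\alpha\}$ with $\hat O_0=\hat 1$. Writing $\hat{\mathsf A}=\sum_\alpha\hat O_\alpha A_\alpha$ with $(A_\alpha)_{ab}=\langle\hat O_\alpha,\hat{\mathsf A}_{ab}\rangle$ (so $A_0=\langle\hat 1,\hat{\mathsf A}\rangle$ entrywise), the transfer matrix is $T_A=\sum_\alpha\overline{A_\alpha}\otimes A_\alpha$. *)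

From HB Require Import structures.
From mathcomp Require Import all_boot all_order all_algebra.
From mathcomp Require Import mxtens.
Set Implicit Arguments. Unset Strict Implicit. Unset Printing Implicit Defensive.
Import Order.TTheory GRing.Theory Num.Theory.
Local Open Scope ring_scope.

Definition adjmx {C : numClosedFieldType} {m n : nat} (A : 'M[C]_(m, n)) : 'M[C]_(n, m) :=
  (map_mx Num.conj A)^T.

Definition hs_inner {C : numClosedFieldType} {q : nat} (A B : 'M[C]_q) : C :=
  \tr (adjmx A *m B) / \tr (1%:M : 'M[C]_q).

Definition orthonormal_basis {C : numClosedFieldType} {q : nat} {I : finType}
  (O : I -> 'M[C]_q) : Prop :=
  (forall a b, hs_inner (O a) (O b) = (a == b)%:R) /\
  (forall X : 'M[C]_q, exists c : I -> C, X = \sum_a c a *: O a).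

Definition comp_mx {C : numClosedFieldType} {q chi : nat}
  (O' : 'M[C]_q) (Ahat : 'M['M[C]_q]_chi) : 'M[C]_chi :=
  \matrix_(a, b) hs_inner O' (Ahat a b).

Definition transfer_mx {C : numClosedFieldType} {q chi : nat} {I : finType}
  (O : I -> 'M[C]_q) (Ahat : 'M['M[C]_q]_chi) : 'M[C]_(chi * chi) :=
  \sum_(al : I) tensmx (map_mx Num.conj (comp_mx (O al) Ahat)) (comp_mx (O al) Ahat).

From HB Require Import structures.
From mathcomp Require Import all_boot all_order all_algebra.
From mathcomp Require Import mxtens sesquilinear spectral ring zify.
Set Implicit Arguments. Unset Strict Implicit. Unset Printing Implicit Defensive.
Import Order.TTheory GRing.Theory Num.Theory.
Local Open Scope ring_scope.

(* The transfer matrix T represents, on vectorised matrices, the completely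
   positive map E(X) = sum_a A_a^dagger X A_a.  The theorem follows from a
   Lyapunov certificate: a positive semidefinite W with W - E(W) = c 1, c > 0.
   Indeed, for u with u A_0^dagger = conj(lam) u, the quadratic form of W at u
   is at least c |u|^2 + |lam|^2 (u W u^dagger), which forces |lam| < 1.
   Over the complex numbers W would be sum_k E^k(1); over an arbitrary
   numClosedFieldType there are no limits, so W is reached by a homotopy
   instead.  Since rho(T) < 1, 1 - sT is invertible for s in [0, 1], and the
   adjugate gives a polynomial family W(s) with W(s) - sE(W(s)) = c(s) 1,
   c(s) > 0.  W(s) is hermitian, W(0) is positive definite, and a positive
   semidefinite W(s) is automatically definite.  The coefficients of the
   characteristic polynomial of -W(s) are real polynomials in s, all
   nonnegative when W(s) is semidefinite and all positive when it is definite;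
   so none of them can reach 0 on [0, 1], and W(1) is semidefinite. *)

Lemma char_poly_trmx (R : comNzRingType) n (M : 'M[R]_n) :
  char_poly M^T = char_poly M.
Proof.
rewrite /char_poly -det_tr; congr (\det _).
by apply/matrixP => i j; rewrite !mxE eq_sym.
Qed.

Section Adjoint.
Variable C : numClosedFieldType.

Lemma adjmxE m n (A : 'M[C]_(m, n)) : adjmx A = (A ^t* )%sesqui.
Proof. exact: map_trmx. Qed.

Lemma adjmxK m n (A : 'M[C]_(m, n)) : adjmx (adjmx A) = A.
Proof. by rewrite !adjmxE trmxCK. Qed.

Lemma adjmxM m n p (A : 'M[C]_(m, n)) (B : 'M[C]_(n, p)) :
  adjmx (A *m B) = adjmx B *m adjmx A.
Proof. by rewrite /adjmx map_mxM trmx_mul. Qed.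

Lemma adjmxD m n (A B : 'M[C]_(m, n)) : adjmx (A + B) = adjmx A + adjmx B.
Proof. by apply/matrixP => i j; rewrite !mxE rmorphD. Qed.

Lemma adjmxZ m n a (A : 'M[C]_(m, n)) : adjmx (a *: A) = a^* *: adjmx A.
Proof. by apply/matrixP => i j; rewrite !mxE rmorphM. Qed.

Lemma adjmx1 n : adjmx (1%:M : 'M[C]_n) = 1%:M.
Proof. by apply/matrixP => i j; rewrite !mxE rmorph_nat eq_sym. Qed.

Lemma adjmx_sum m n (J : finType) (F : J -> 'M[C]_(m, n)) :
  adjmx (\sum_j F j) = \sum_j adjmx (F j).
Proof.
apply/matrixP => i k; rewrite !mxE !summxE rmorph_sum.
by apply: eq_bigr => j _; rewrite !mxE.
Qed.

Definition qform n (W : 'M[C]_n) (u : 'rV[C]_n) : C := (u *m W *m adjmx u) 0 0.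
Definition psdmx n (W : 'M[C]_n) := forall u, 0 <= qform W u.
Definition pdmx n (W : 'M[C]_n) := forall u, u != 0 -> 0 < qform W u.

Lemma qform1_gt0 n (u : 'rV[C]_n) : u != 0 -> 0 < qform 1%:M u.
Proof. by rewrite /qform mulmx1 adjmxE -dotmxE dnorm_gt0. Qed.

Lemma qformD n (W V : 'M[C]_n) u : qform (W + V) u = qform W u + qform V u.
Proof. by rewrite /qform mulmxDr mulmxDl mxE. Qed.

Lemma qformZ n a (W : 'M[C]_n) u : qform (a *: W) u = a * qform W u.
Proof. by rewrite /qform -scalemxAr -scalemxAl mxE. Qed.

Lemma qform_sum n (J : finType) (F : J -> 'M[C]_n) u :
  qform (\sum_j F j) u = \sum_j qform (F j) u.
Proof. by rewrite /qform mulmx_sumr mulmx_suml summxE. Qed.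

Lemma qform_congr n (W B : 'M[C]_n) u :
  qform (adjmx B *m W *m B) u = qform W (u *m adjmx B).
Proof. by rewrite /qform adjmxM adjmxK !mulmxA. Qed.

Lemma qformZr n (W : 'M[C]_n) a u : qform W (a *: u) = `|a| ^+ 2 * qform W u.
Proof. by rewrite /qform adjmxZ -scalemxAr -!scalemxAl !mxE normCK; ring. Qed.

Lemma qform_eigenvector n (W : 'M[C]_n) u a :
  u *m W = a *: u -> qform W u = a * qform 1%:M u.
Proof. by move=> uW; rewrite /qform uW mulmx1 -scalemxAl mxE. Qed.

Lemma pdmx_scalar n c : 0 < c -> pdmx (c *: 1%:M : 'M[C]_n).
Proof. by move=> c_gt0 u u_neq0; rewrite qformZ mulr_gt0 ?qform1_gt0. Qed.

End Adjoint.

Section Definiteness.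
Variable C : numClosedFieldType.

Lemma coef_prod_XsubC_pos (r : seq C) : (forall z, z \in r -> z < 0) ->
  let p := \prod_(z <- r) ('X - z%:P) in
  (forall k, 0 <= p`_k) /\ (forall k, (k <= size r)%N -> 0 < p`_k).
Proof.
elim: r => [|x r IH] r_neg /=.
  rewrite big_nil; split => k; rewrite coef1; first by case: (k == 0%N).
  by rewrite leqn0 => ->.
have [IH_ge0 IH_gt0] := IH (fun z zr => r_neg z (@mem_behead _ (x :: r) z zr)).
have x_neg : 0 < - x by rewrite oppr_gt0 r_neg ?mem_head.
rewrite big_cons; set q := \prod_(z <- r) _.
have coefE k :
    (('X - x%:P) * q)`_k = (if k == 0%N then 0 else q`_k.-1) + - x * q`_k.
  by rewrite mulrBl coefB coefXM -coefCM polyCN mulNr coefN.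
split => k; rewrite coefE.
  by rewrite addr_ge0 ?mulr_ge0 ?(ltW x_neg) //; case: (k == 0%N).
move=> k_le; have [->|k_neq0] := eqVneq k 0%N.
  by rewrite /= add0r mulr_gt0 ?IH_gt0.
rewrite ltr_pwDl ?mulr_ge0 ?(ltW x_neg) ?IH_gt0 //.
by move: k_le k_neq0 => /=; lia.
Qed.

Lemma pdmx_char_coef_gt0 n (W : 'M[C]_n) :
  pdmx W -> forall k : 'I_n.+1, 0 < (char_poly (- W))`_k.
Proof.
move=> W_pd k.
have [r pE] := closed_field_poly_normal (char_poly (- W)).
rewrite (monicP (char_poly_monic _)) scale1r in pE.
have size_r : size r = n.
  by have := size_char_poly (- W); rewrite pE size_prod_XsubC => -[].
suff r_neg z : z \in r -> z < 0.
  rewrite pE; apply: (coef_prod_XsubC_pos r_neg).2.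
  by rewrite size_r; exact: ltn_ord k.
move=> zr; have : root (char_poly (- W)) z by rewrite pE root_prod_XsubC.
rewrite -eigenvalue_root_char => /eigenvalueP [v vW v_neq0].
have : 0 < qform W v := W_pd v v_neq0.
have vW' : v *m W = - z *: v by rewrite -[W]opprK mulmxN vW scaleNr.
by rewrite (qform_eigenvector vW') pmulr_lgt0 ?qform1_gt0 // oppr_gt0.
Qed.

Lemma monic_horner_gt0 (p : {poly C}) x : p \is monic ->
  (forall k, 0 <= p`_k) -> 0 < x -> 0 < p.[x].
Proof.
move=> p_monic p_ge0 x_gt0; rewrite horner_coef.
have [m size_p] : exists m, size p = m.+1.
  by exists (size p).-1; rewrite prednK // size_poly_gt0 monic_neq0.
have lead1 : p`_m = 1 by move/monicP: p_monic; rewrite lead_coefE size_p.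
rewrite size_p (bigD1 ord_max) //= lead1 mul1r ltr_pwDl ?exprn_gt0 //.
by apply: sumr_ge0 => i _; rewrite mulr_ge0 ?exprn_ge0 ?(ltW x_gt0).
Qed.

Lemma char_coef_ge0_eigenvalue_ge0 n (W : 'M[C]_n) a :
  (forall k : 'I_n.+1, 0 <= (char_poly (- W))`_k) ->
  eigenvalue W a -> a \is Num.real -> 0 <= a.
Proof.
move=> coef_ge0 /eigenvalueP [v vW v_neq0] a_real.
have {}coef_ge0 k : 0 <= (char_poly (- W))`_k.
  have [k_le|k_gt] := leqP k n; last by rewrite nth_default // size_char_poly.
  exact: (coef_ge0 (Ordinal (k_le : (k < n.+1)%N))).
rewrite real_leNgt ?real0 //; apply/negP => a_lt0.
have : root (char_poly (- W)) (- a).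
  rewrite -eigenvalue_root_char; apply/eigenvalueP.
  by exists v; rewrite // mulmxN vW scaleNr.
by rewrite /root gt_eqF // monic_horner_gt0 ?char_poly_monic // oppr_gt0.
Qed.

Lemma hermitian_psdmx n (W : 'M[C]_n) : adjmx W = W ->
  (forall a, eigenvalue W a -> a \is Num.real -> 0 <= a) -> psdmx W.
Proof.
move=> W_herm eig_ge0.
have W_hsym : W \is hermsymmx.
  by apply/is_hermitianmxP; rewrite expr0 scale1r -adjmxE W_herm.
have /orthomx_spectralP WE := hermitian_normalmx W_hsym.
set P := spectralmx W in WE; set d := spectral_diag W in WE.
have P_unitary : P \is unitarymx := spectral_unitarymx W.
have PW : P *m W = diag_mx d *m P.
  by rewrite WE !mulmxA mulmxV ?mul1mx // unitarymx_unit.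
have d_ge0 i : 0 <= d 0 i.
  have d_real : d 0 i \is Num.real.
    by move/mxOverP: (hermitian_spectral_diag_real W_hsym); apply.
  apply: eig_ge0 d_real; apply/eigenvalueP; exists (row i P).
    by rewrite -row_mul PW mul_diag_mx; apply/rowP => j; rewrite !mxE.
  apply/eqP => Pi0; move/row_unitarymxP: P_unitary => /(_ i i).
  by rewrite eqxx dotmxE Pi0 mul0mx mxE => /eqP; rewrite eq_sym oner_eq0.
move=> u; have -> : qform W u = qform (diag_mx d) (u *m adjmx P).
  by rewrite -qform_congr {1}WE invmx_unitary // adjmxE.
rewrite /qform mxE; apply: sumr_ge0 => j _; rewrite mul_mx_diag !mxE.
by rewrite mulrAC mulr_ge0 // mul_conjC_ge0.
Qed.

Lemma hermitian_char_coef_real n (W : 'M[C]_n) : adjmx W = W ->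
  forall k, (char_poly (- W))`_k \is Num.real.
Proof.
move=> W_herm k; apply/CrealP; rewrite -(coef_map Num.conj) map_char_poly.
have -> : map_mx Num.conj (- W) = (- W)^T.
  rewrite map_mxN -{1}W_herm /adjmx map_trmx /= -map_mx_comp.
  rewrite map_mx_id ?linearN //.
  by move=> x; rewrite /= conjCK.
by rewrite char_poly_trmx.
Qed.

End Definiteness.

Section RealPoly.
Variable C : numClosedFieldType.
Implicit Types (p q g : {poly C}) (a b s x z : C).

Lemma conj_poly_divr p g : g != 0 -> map_poly Num.conj g = g ->
  map_poly Num.conj (p * g) = p * g -> map_poly Num.conj p = p.
Proof.
move=> g_neq0 g_real pg_real; apply: (mulIf g_neq0).
by rewrite -[in LHS]g_real -rmorphM.
Qed.

Lemma real_poly_factor p : map_poly Num.conj p = p -> (1 < size p)%N ->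
  exists q g, [/\ p = q * g, map_poly Num.conj q = q, (size q < size p)%N &
    (exists2 z, z \is Num.real & g = 'X - z%:P) \/
    (forall x, x \is Num.real -> 0 <= g.[x])].
Proof.
move=> p_real size_p; have p_neq0 : p != 0 by rewrite -size_poly_gt0 ltnW.
have split_off g : g \is monic -> (1 < size g)%N -> map_poly Num.conj g = g ->
    (g %| p)%R ->
    exists q, [/\ p = q * g, map_poly Num.conj q = q & (size q < size p)%N].
  move=> g_monic size_g g_real /divpK pE; exists (p %/ g).
  have q_neq0 : p %/ g != 0.
    by apply: contraNneq p_neq0 => q0; rewrite -pE q0 mul0r.
  split; first by rewrite pE.
    by apply: (conj_poly_divr (monic_neq0 g_monic) g_real); rewrite pE.
  have size_pE : size p = (size (p %/ g) + size g).-1.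
    by rewrite -{1}pE size_Mmonic.
  rewrite size_pE -subn1 -addnBA ?(ltnW size_g) //.
  by rewrite -[X in (X < _)%N]addn0 ltn_add2l subn_gt0.
have /closed_rootP [z pz] : size p != 1 by rewrite gtn_eqF.
have [z_real|z_nreal] := boolP (z \is Num.real).
  have := split_off _ (monicXsubC z).
  rewrite size_XsubC map_polyXsubC /= (CrealP z_real) dvdp_XsubCl pz.
  case=> // q [pE q_real size_q].
  by exists q, ('X - z%:P); split => //; left; exists z.
have conj_neq : z^* != z by apply: contra z_nreal => /eqP /CrealP.
pose g := ('X - z%:P) * ('X - z^*%:P).
have g_dvd : (g %| p)%R.
  have := @uniq_roots_dvdp _ p [:: z; z^*]; rewrite big_cons big_seq1; apply.
    by rewrite /= pz /root andbT -p_real horner_map /= (eqP pz) rmorph0.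
  by rewrite uniq_rootsE /= inE eq_sym conj_neq.
have g_monic : g \is monic by rewrite monicMl ?monicXsubC.
have := split_off g g_monic.
rewrite size_Mmonic ?monicXsubC ?polyXsubC_eq0 // !size_XsubC.
rewrite rmorphM /= !map_polyXsubC /= conjCK mulrC g_dvd.
case=> // q [pE q_real size_q].
exists q, g; split => //; right => x x_real.
have -> : g.[x] = (x - z) * (x - z)^*.
  by rewrite /g hornerM !hornerXsubC rmorphB /= (CrealP x_real).
exact: mul_conjC_ge0.
Qed.

Lemma real_poly_sign_const p a b : map_poly Num.conj p = p ->
  a \is Num.real -> b \is Num.real -> a <= b ->
  (forall x, a <= x -> x < b -> ~~ root p x) -> 0 <= p.[a] * p.[b].
Proof.
move=> + a_real b_real ab; have [n] := ubnP (size p).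
elim: n p => // n IH p size_p p_real no_root.
have [size_p_le1|size_p_gt1] := leqP (size p) 1.
  have p0_real : p`_0 \is Num.real by apply/CrealP; rewrite -{2}p_real coef_map.
  by rewrite (size1_polyC size_p_le1) !hornerC -{2}(CrealP p0_real) mul_conjC_ge0.
have [q [g [pE q_real size_q g_sign]]] := real_poly_factor p_real size_p_gt1.
rewrite pE !hornerM mulrACA mulr_ge0 //.
  apply: IH => [|//|x ax xb]; first exact: leq_trans size_q _.
  by apply: contra (no_root x ax xb); rewrite pE rootM => ->.
case: g_sign pE => [[z z_real ->] pE|g_ge0]; last by rewrite mulr_ge0 ?g_ge0.
rewrite !hornerXsubC; have [za|az] := real_ltP z_real a_real.
  by rewrite mulr_ge0 // subr_ge0 ltW // (lt_le_trans za).
have [zb|bz] := real_ltP z_real b_real.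
  by move: (no_root z az zb); rewrite pE rootM root_XsubC eqxx orbT.
by rewrite mulr_le0 // subr_le0 // (le_trans ab).
Qed.

Lemma first_in_unit_interval (rs : seq C) : exists b,
  [/\ 0 <= b <= 1, (b == 1) || (b \in rs) &
      forall x, x \in rs -> 0 <= x -> b <= x].
Proof.
elim: rs => [|x rs [b [/andP [b_ge0 b_le1] b_1rs b_min]]].
  by exists 1; split; rewrite ?eqxx // lexx andbT.
have [/andP [x_ge0 xb]|x_out] := boolP ((0 <= x) && (x < b)).
  exists x; rewrite x_ge0 mem_head orbT (le_trans (ltW xb)) //; split => // y.
  rewrite in_cons => /orP [/eqP -> //|y_rs y_ge0].
  exact: le_trans (ltW xb) (b_min y y_rs y_ge0).
exists b; rewrite b_ge0 b_le1 in_cons; split => //.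
  by case/orP: b_1rs => ->; rewrite ?orbT.
move=> y /orP [/eqP -> x_ge0|y_rs]; last exact: b_min.
by rewrite real_leNgt ?ger0_real //; move: x_out; rewrite x_ge0.
Qed.

Lemma conj_poly_symmetrize p :
  map_poly Num.conj (p + map_poly Num.conj p) = p + map_poly Num.conj p.
Proof.
by apply/polyP => i; rewrite !(coefD, coef_map) /= rmorphD /= conjCK addrC.
Qed.

Lemma horner_symmetrize p s : s \is Num.real -> p.[s] \is Num.real ->
  (p + map_poly Num.conj p).[s] = p.[s] *+ 2.
Proof.
move=> s_real ps_real.
by rewrite hornerD -{2}(CrealP s_real) horner_map /= (CrealP ps_real) mulr2n.
Qed.

(* A substitute for the connectedness of [0, 1], which is unavailable in a
   possibly non-archimedean C: a real polynomial keeps its sign between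
   consecutive roots (real_poly_sign_const). *)
Lemma poly_unit_continuation n (F : 'I_n -> {poly C}) :
  (forall k s, 0 <= s <= 1 -> (F k).[s] \is Num.real) ->
  (forall k, 0 < (F k).[0]) ->
  (forall s, 0 <= s <= 1 ->
    (forall k, 0 <= (F k).[s]) -> forall k, (F k).[s] != 0) ->
  forall k, 0 < (F k).[1].
Proof.
move=> F_real F0_gt0 F_nonvanishing.
pose G k := F k + map_poly Num.conj (F k).
have GE k s : 0 <= s <= 1 -> (G k).[s] = (F k).[s] *+ 2.
  move=> s01; rewrite horner_symmetrize ?F_real //.
  by case/andP: s01 => s_ge0 _; exact: ger0_real.
have l01 : 0 <= (0 : C) <= 1 by rewrite lexx ler01.
pose P := \prod_k G k.
have P_neq0 : P != 0.
  apply: contraTneq isT => P0; have : P.[0] != 0.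
    rewrite horner_prod; apply/prodf_neq0 => k _.
    by rewrite GE // mulrn_eq0 (gt_eqF (F0_gt0 k)).
  by rewrite P0 horner0 eqxx.
have [rs PE] := closed_field_poly_normal P.
have rootP x : root P x = (x \in rs).
  by rewrite PE rootZ ?lead_coef_eq0 // root_prod_XsubC.
have [b [b01 b_1rs b_min]] := first_in_unit_interval rs.
have [b_ge0 b_le1] := andP b01.
have Fb_ge0 k : 0 <= (F k).[b].
  have := real_poly_sign_const (conj_poly_symmetrize (F k)) (real0 _)
    (ger0_real b_ge0) b_ge0.
  rewrite -/(G k) !GE // pmulr_rge0 ?pmulrn_lgt0 // pmulrn_lge0 //.
  apply=> x x_ge0 xb.
  apply: contraTN xb => Gx; rewrite -real_leNgt ?ger0_real // b_min // -rootP.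
  by rewrite /root /P horner_prod (bigD1 k) //= (eqP Gx) mul0r.
have Fb_neq0 := F_nonvanishing b b01 Fb_ge0.
have b1 : b = 1.
  case/orP: b_1rs => [/eqP //|]; rewrite -rootP /root /P horner_prod.
  rewrite prodf_seq_eq0 => /hasP [k _ /=].
  by rewrite GE // mulrn_eq0 (negPf (Fb_neq0 k)).
by move=> k; rewrite lt_def -b1 Fb_neq0 Fb_ge0.
Qed.

End RealPoly.

Lemma eigenvalue_adjmx (C : numClosedFieldType) n (B : 'M[C]_n) a :
  eigenvalue B a -> exists2 u : 'rV_n, u != 0 & u *m adjmx B = a^* *: u.
Proof.
rewrite eigenvalue_root_char -char_poly_trmx -eigenvalue_root_char.
move=> /eigenvalueP [w wB w_neq0]; exists (map_mx Num.conj w).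
  by rewrite map_mx_eq0.
by rewrite /adjmx map_trmx -map_mxM wB map_mxZ.
Qed.

Section TensorVec.
Variables (R : comPzRingType) (m n : nat).

Definition tvec (X : 'M[R]_(m, n)) : 'rV[R]_(m * n) :=
  \row_k X (mxtens_unindex k).1 (mxtens_unindex k).2.
Definition untvec (x : 'rV[R]_(m * n)) : 'M[R]_(m, n) :=
  \matrix_(i, j) x 0 (mxtens_index (i, j)).

Lemma tvecK : cancel tvec untvec.
Proof. by move=> X; apply/matrixP => i j; rewrite !mxE mxtens_indexK. Qed.

Lemma untvecK : cancel untvec tvec.
Proof.
by move=> x; apply/rowP => k; rewrite !mxE -surjective_pairing mxtens_unindexK.
Qed.

Lemma untvec0 : untvec 0 = 0.
Proof. by apply/matrixP => i j; rewrite !mxE. Qed.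

Lemma untvec_eq0 x : (untvec x == 0) = (x == 0).
Proof. by rewrite -untvec0 (can_eq untvecK). Qed.

Lemma untvecB x y : untvec (x - y) = untvec x - untvec y.
Proof. by apply/matrixP => i j; rewrite !mxE. Qed.

Lemma untvecZ a x : untvec (a *: x) = a *: untvec x.
Proof. by apply/matrixP => i j; rewrite !mxE. Qed.

Lemma untvec_sum (J : finType) (F : J -> 'rV[R]_(m * n)) :
  untvec (\sum_j F j) = \sum_j untvec (F j).
Proof.
apply/matrixP => i k; rewrite !mxE !summxE.
by apply: eq_bigr => j _; rewrite !mxE.
Qed.

Lemma untvec_mul_tens x (B : 'M[R]_m) (D : 'M[R]_n) :
  untvec (x *m (B *t D)) = B^T *m untvec x *m D.
Proof.
apply/matrixP => k l; rewrite !mxE.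
have index_bij : {on [pred ij | true], bijective (@mxtens_index m n)}.
  apply: onW_bij; exists (@mxtens_unindex m n).
    exact: mxtens_indexK.
  exact: mxtens_unindexK.
pose F i j :=
  x 0 (mxtens_index (i, j)) *
  (B *t D) (mxtens_index (i, j)) (mxtens_index (k, l)).
rewrite (reindex _ index_bij) /= (eq_bigr (fun ij => F ij.1 ij.2)); last by case.
rewrite -(pair_big xpredT xpredT F) /=.
rewrite exchange_big; apply: eq_bigr => j _; rewrite !mxE big_distrl.
by apply: eq_bigr => i _; rewrite /F tensmxE !mxE /= mulrA [_ * B i k]mulrC.
Qed.

End TensorVec.

Lemma map_untvec (R S : comPzRingType) (f : {rmorphism R -> S}) m n
  (x : 'rV[R]_(m * n)) :
  map_mx f (untvec x) = untvec (map_mx f x).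
Proof. by apply/matrixP => i j; rewrite !mxE. Qed.

Section KrausMap.
Variables (C : numClosedFieldType) (n : nat) (I : finType) (A : I -> 'M[C]_n).

Definition transfer : 'M[C]_(n * n) := \sum_al map_mx Num.conj (A al) *t A al.
Definition kraus_map (X : 'M[C]_n) : 'M[C]_n := \sum_al adjmx (A al) *m X *m A al.

Lemma kraus_mapB X Y : kraus_map (X - Y) = kraus_map X - kraus_map Y.
Proof.
rewrite /kraus_map -sumrB; apply: eq_bigr => al _.
by rewrite mulmxBr mulmxBl.
Qed.

Lemma kraus_mapZ a X : kraus_map (a *: X) = a *: kraus_map X.
Proof.
rewrite /kraus_map scaler_sumr; apply: eq_bigr => al _.
by rewrite -scalemxAr -scalemxAl.
Qed.

Lemma kraus_map_adj X : kraus_map (adjmx X) = adjmx (kraus_map X).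
Proof.
rewrite /kraus_map adjmx_sum; apply: eq_bigr => al _.
by rewrite !adjmxM adjmxK mulmxA.
Qed.

Lemma untvec_transfer x : untvec (x *m transfer) = kraus_map (untvec x).
Proof.
rewrite mulmx_sumr untvec_sum; apply: eq_bigr => al _.
by rewrite untvec_mul_tens.
Qed.

Lemma untvec_pencil s x :
  untvec (x *m (1%:M - s *: transfer)) = untvec x - s *: kraus_map (untvec x).
Proof. by rewrite mulmxBr mulmx1 -scalemxAr untvecB untvecZ untvec_transfer. Qed.

Lemma qform_kraus_map W u :
  qform (kraus_map W) u = \sum_al qform W (u *m adjmx (A al)).
Proof. by rewrite qform_sum; apply: eq_bigr => al _; rewrite qform_congr. Qed.

Lemma psdmx_kraus_map W : psdmx W -> psdmx (kraus_map W).
Proof. by move=> W_psd u; rewrite qform_kraus_map sumr_ge0. Qed.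

Lemma pdmx_of_lyapunov s c W : 0 <= s -> 0 < c -> psdmx W ->
  W - s *: kraus_map W = c *: 1%:M -> pdmx W.
Proof.
move=> s_ge0 c_gt0 W_psd WE; rewrite -(subrK (s *: kraus_map W) W) WE.
move=> u u_neq0; rewrite qformD !qformZ ltr_pwDl ?mulr_ge0 ?psdmx_kraus_map //.
by rewrite mulr_gt0 ?qform1_gt0.
Qed.

Lemma lyapunov_eigenvalue_lt1 W c al a : psdmx W -> 0 < c ->
  W - kraus_map W = c *: 1%:M -> eigenvalue (A al) a -> `|a| < 1.
Proof.
move=> W_psd c_gt0 WE /eigenvalue_adjmx [u u_neq0 uA].
have uW_gt0 : 0 < c * qform 1%:M u by rewrite mulr_gt0 ?qform1_gt0.
have WuE : qform W u = c * qform 1%:M u + \sum_be qform W (u *m adjmx (A be)).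
  by rewrite -qform_kraus_map -qformZ -qformD -WE subrK.
have Wu_lt : `|a| ^+ 2 * qform W u < qform W u.
  rewrite [X in _ < X]WuE (bigD1 al) //= uA qformZr norm_conjC addrCA ltrDl.
  by rewrite ltr_pwDl // sumr_ge0.
rewrite real_ltNge ?normr_real //; apply/negP => a_ge1.
have := ler_peMl (W_psd u) (exprn_ege1 2 a_ge1).
by move=> /(lt_le_trans Wu_lt); rewrite ltxx.
Qed.

End KrausMap.

Section LyapunovPath.
Variables (C : numClosedFieldType) (n : nat) (I : finType) (A : I -> 'M[C]_n).
Hypothesis transfer_lt1 : forall a, eigenvalue (transfer A) a -> `|a| < 1.

Lemma kraus_map_scaled_fix s X :
  0 <= s <= 1 -> X = s *: kraus_map A X -> X = 0.
Proof.
case/andP=> s_ge0 s_le1 XE; apply/eqP/negPn/negP => X_neq0.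
have s_gt0 : 0 < s.
  rewrite lt_def s_ge0 andbT.
  by apply: contraNneq X_neq0 => s0; rewrite XE s0 scale0r.
have EX : kraus_map A X = s^-1 *: X.
  by rewrite {2}XE scalerA mulVf ?gt_eqF // scale1r.
have : `|s^-1| < 1.
  apply: transfer_lt1; apply/eigenvalueP; exists (tvec X).
    by apply: (can_inj (@untvecK _ _ _)); rewrite untvec_transfer untvecZ !tvecK.
  by apply: contraNneq X_neq0 => X0; rewrite -[X]tvecK X0 untvec0.
rewrite ger0_norm ?invr_ge0 // invf_lt1 //.
by move=> /(le_lt_trans s_le1); rewrite ltxx.
Qed.

Definition pencil : 'M[{poly C}]_(n * n) :=
  1%:M - 'X *: map_mx polyC (transfer A).

(* The adjugate solves Y - sE(Y) = det(1 - sT) 1 with Y polynomial in s;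
   the extra factor conj(det) makes the right-hand side |det(1 - sT)|^2 1. *)
Definition lyapunov_path_poly : 'M[{poly C}]_n :=
  map_poly Num.conj (\det pencil) *:
    untvec (map_mx polyC (tvec 1%:M) *m \adj pencil).

Definition lyapunov_path s := map_mx (horner_eval s) lyapunov_path_poly.

Lemma pencil_eval s : map_mx (horner_eval s) pencil = 1%:M - s *: transfer A.
Proof.
rewrite map_mxB map_mx1 map_mxZ /= horner_evalE hornerX -map_mx_comp.
by rewrite map_mx_id // => x /=; rewrite horner_evalE hornerC.
Qed.

Lemma horner_det_pencil s : (\det pencil).[s] = \det (1%:M - s *: transfer A).
Proof. by rewrite -pencil_eval det_map_mx. Qed.

Lemma det_pencil_neq0 s : 0 <= s <= 1 -> (\det pencil).[s] != 0.
Proof.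
move=> s01; rewrite horner_det_pencil; apply/det0P => -[v v_neq0 vM].
have : untvec v = 0.
  apply: (kraus_map_scaled_fix s01); apply/eqP.
  by rewrite -subr_eq0 -untvec_pencil vM untvec0.
by move/eqP; rewrite untvec_eq0 (negPf v_neq0).
Qed.

Lemma untvec_adj_pencil s
  (Y := untvec (tvec 1%:M *m \adj (1%:M - s *: transfer A))) :
  Y - s *: kraus_map A Y = \det (1%:M - s *: transfer A) *: 1%:M.
Proof.
by rewrite /Y -untvec_pencil -mulmxA mul_adj_mx mul_mx_scalar untvecZ tvecK.
Qed.

Lemma lyapunov_pathE s : s \is Num.real ->
  lyapunov_path s - s *: kraus_map A (lyapunov_path s) =
  `|(\det pencil).[s]| ^+ 2 *: 1%:M.
Proof.
move=> s_real; have -> : lyapunov_path s = ((\det pencil).[s])^* *: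
    untvec (tvec 1%:M *m \adj (1%:M - s *: transfer A)).
  rewrite /lyapunov_path /lyapunov_path_poly map_mxZ map_untvec map_mxM.
  rewrite map_mx_adj pencil_eval /= horner_evalE -{1}(CrealP s_real) horner_map.
  rewrite -map_mx_comp.
  by rewrite map_mx_id // => x /=; rewrite horner_evalE hornerC.
rewrite kraus_mapZ scalerA mulrC -scalerA -scalerBr untvec_adj_pencil scalerA.
by rewrite horner_det_pencil normCKC.
Qed.

Lemma lyapunov_path_herm s : 0 <= s <= 1 ->
  adjmx (lyapunov_path s) = lyapunov_path s.
Proof.
move=> s01; have s_real : s \is Num.real by apply: ger0_real; case/andP: s01.
have WE : lyapunov_path s =
    s *: kraus_map A (lyapunov_path s) + `|(\det pencil).[s]| ^+ 2 *: 1%:M.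
  by rewrite addrC -lyapunov_pathE // subrK.
set W := lyapunov_path s in WE *; set c := `|_| ^+ 2 in WE.
have adjWE : adjmx W = s *: kraus_map A (adjmx W) + c *: 1%:M.
  rewrite {1}WE adjmxD !adjmxZ adjmx1 -kraus_map_adj (CrealP s_real).
  by rewrite rmorphXn /= conj_normC.
apply/esym/eqP; rewrite -subr_eq0; apply/eqP.
apply: (kraus_map_scaled_fix s01); rewrite kraus_mapB scalerBr {1}WE {1}adjWE.
by rewrite opprD addrACA subrr addr0.
Qed.

Lemma lyapunov_path_char_coef s k :
  (char_poly (- lyapunov_path s))`_k =
  ((char_poly (- lyapunov_path_poly))`_k).[s].
Proof.
by rewrite /lyapunov_path -map_mxN -map_char_poly coef_map /= horner_evalE.
Qed.

Lemma lyapunov_path_psd s : 0 <= s <= 1 ->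
  (forall k : 'I_n.+1, 0 <= (char_poly (- lyapunov_path s))`_k) ->
  psdmx (lyapunov_path s).
Proof.
move=> s01 coef_ge0; apply: hermitian_psdmx (lyapunov_path_herm s01) _ => a.
exact: char_coef_ge0_eigenvalue_ge0.
Qed.

Lemma lyapunov_path_pd s : 0 <= s <= 1 ->
  psdmx (lyapunov_path s) -> pdmx (lyapunov_path s).
Proof.
move=> s01 W_psd; have /andP [s_ge0 _] := s01.
apply: pdmx_of_lyapunov s_ge0 _ W_psd (lyapunov_pathE (ger0_real s_ge0)).
by rewrite exprn_gt0 // normr_gt0 det_pencil_neq0.
Qed.

Lemma lyapunov_path1_psd : psdmx (lyapunov_path 1).
Proof.
apply: lyapunov_path_psd; first by rewrite ler01 lexx.
move=> k; rewrite lyapunov_path_char_coef ltW //; move: k.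
apply: poly_unit_continuation => [k s s01|k|s s01 coef_ge0 k].
- rewrite -lyapunov_path_char_coef hermitian_char_coef_real //.
  exact: lyapunov_path_herm.
- have W0E := lyapunov_pathE (real0 C); rewrite scale0r subr0 in W0E.
  rewrite -lyapunov_path_char_coef W0E; apply/pdmx_char_coef_gt0/pdmx_scalar.
  by rewrite exprn_gt0 // normr_gt0 det_pencil_neq0 // lexx ler01.
- have W_psd : psdmx (lyapunov_path s).
    by apply: lyapunov_path_psd => // i; rewrite lyapunov_path_char_coef.
  rewrite -lyapunov_path_char_coef gt_eqF //.
  exact/pdmx_char_coef_gt0/lyapunov_path_pd.
Qed.

Lemma lyapunov_solution_exists :
  exists W c, [/\ psdmx W, 0 < c & W - kraus_map A W = c *: 1%:M].
Proof.
exists (lyapunov_path 1), (`|(\det pencil).[1]| ^+ 2); split.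
- exact: lyapunov_path1_psd.
- by rewrite exprn_gt0 // normr_gt0 det_pencil_neq0 // ler01 lexx.
- by have := lyapunov_pathE (real1 C); rewrite scale1r.
Qed.

End LyapunovPath.

Theorem lemma2 (C : numClosedFieldType) (q chi : nat) (I : finType)
  (O : I -> 'M[C]_q) (al0 : I) (Ahat : 'M['M[C]_q]_chi) :
  (0 < q)%N ->
  orthonormal_basis O ->
  O al0 = 1%:M ->
  (forall lam : C, eigenvalue (transfer_mx O Ahat) lam -> `|lam| < 1) ->
  (forall lam : C, eigenvalue (comp_mx (O al0) Ahat) lam -> `|lam| < 1).
Proof.
move=> _ _ _ transfer_lt1.
have [W [c [W_psd c_gt0 WE]]] :=
  lyapunov_solution_exists (A := fun al => comp_mx (O al) Ahat) transfer_lt1.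
by move=> a; apply: lyapunov_eigenvalue_lt1 W_psd c_gt0 WE.
Qed.
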